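(* For all positive integers $m,n$, the posets $\mathcal P(m,n)$ and $\mathcal P(n,m)$ are isomorphic.
   Context: $\mathcal P(m,n)$ is the poset whose elements are the monomials of degree $m$ in $K[x_0,\dots,x_n]$, with partial order $\ge_B$ generated (as the reflexive-transitive closure) by the covering relation: $\mathbf x^A\succ_B\mathbf x^B$ iff there is $i<n$ with $\mathbf x^A=\frac{x_i}{x_{i+1}}\mathbf x^B$. *)

From mathcomp Require Import all_boot.
From Stdlib Require Import Relations.
Set Implicit Arguments. Unset Strict Implicit. Unset Printing Implicit Defensive.

(* Monomials of degree m in K[x_0,...,x_n], represented by their exponent
   vectors A : 'I_(n+1) -> nat with |A| = m. *)
Definition monomial (m n : nat) : Type :=
  {A : {ffun 'I_n.+1 -> nat} | \sum_(i < n.+1) A i == m}.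

(* Covering relation x^A >_B x^B : x^A = (x_i / x_{i+1}) x^B for some i < n,
   i.e. A = B + e_i - e_{i+1}. *)
Definition Bcover (m n : nat) (A B : monomial m n) : Prop :=
  exists (i j : 'I_n.+1),
    (j : nat) = i.+1 /\
    (sval A) i = (sval B) i + 1 /\
    (sval B) j = (sval A) j + 1 /\
    (forall k : 'I_n.+1, k != i -> k != j -> (sval A) k = (sval B) k).

Definition Bge (m n : nat) : relation (monomial m n) :=
  clos_refl_trans (monomial m n) (@Bcover m n).

Definition poset_iso (m n m' n' : nat) : Prop :=
  exists f : monomial m n -> monomial m' n',
    bijective f /\ (forall A B, Bge A B <-> Bge (f A) (f B)).

From mathcomp Require Import all_boot zify.
From Stdlib Require Import Relations.
Set Implicit Arguments. Unset Strict Implicit. Unset Printing Implicit Defensive.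

(* Encode a monomial x^A by its partial sums s_A(k) = A_0 + ... + A_(k-1).
   Multiplying by x_i / x_(i+1) raises s(i+1) by one and fixes all other
   partial sums, so >=_B is exactly the pointwise (dominance) order on partial
   sums: a pointwise gap can be closed one cover at a time, always at the
   largest index where it is still present.  The values
   s_A(1) <= ... <= s_A(n) in [0, m] describe a lattice path in an n x m box;
   transposing the box (conjugating the partition) is a dominance-preserving
   involution between P(m,n) and P(n,m). *)

Section PartialSums.

Variable N : nat.
Implicit Types X Y : {ffun 'I_N -> nat}.

Definition psum X (k : nat) : nat := \sum_(j < N) (j < k) * X j.

Lemma psum0 X : psum X 0 = 0.
Proof. by rewrite /psum big1. Qed.

Lemma psumS X (i : 'I_N) : psum X i.+1 = psum X i + X i.
Proof.
rewrite /psum (bigD1 i) //= [in RHS](bigD1 i) //= ltnSn ltnn mul1n add0n addnC.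
congr (_ + _); apply: eq_bigr => j ji; rewrite ltnS leq_eqVlt.
by rewrite (inj_eq val_inj) (negbTE ji).
Qed.

Lemma psum_full X k : N <= k -> psum X k = \sum_(j < N) X j.
Proof.
by move=> Nk; apply: eq_bigr => j _; rewrite (leq_trans (ltn_ord j) Nk) mul1n.
Qed.

Lemma psum_mono X : {homo psum X : k k' / k <= k'}.
Proof.
move=> k k' kk'; apply: leq_sum => j _.
by case: (ltnP j k) => // jk; rewrite (leq_trans jk kk').
Qed.

Lemma psum_le_total X k : psum X k <= \sum_(j < N) X j.
Proof. by apply: leq_sum => j _; case: (j < k); rewrite ?mul1n. Qed.

Lemma psum_transfer X Y (i j : 'I_N) :
  (forall l, X l + (l == j) = Y l + (l == i)) ->
  forall k, psum X k + (j < k) = psum Y k + (i < k).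
Proof.
have indicator (l0 : 'I_N) k : \sum_(l < N) (l < k) * (l == l0) = (l0 < k).
  by rewrite (bigD1 l0) //= eqxx muln1 big1 ?addn0 // => l /negbTE ->; rewrite muln0.
move=> XY k; rewrite /psum -(indicator j) -(indicator i) -!big_split /=.
by apply: eq_bigr => l _; rewrite -!mulnDr XY.
Qed.

Lemma psum_transfer_next X Y (i j : 'I_N) : j = i.+1 :> nat ->
  (forall l, X l + (l == j) = Y l + (l == i)) ->
  forall k, psum X k = psum Y k + (k == i.+1).
Proof.
move=> ji XY k; have := psum_transfer XY k; rewrite ji.
by case: (ltngtP k i.+1) => [_|_ /addIn|->]; rewrite ?addn0.
Qed.

End PartialSums.

Lemma ord_succ_neq N (i j : 'I_N) : j = i.+1 :> nat -> (i == j) = false.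
Proof. by move=> ji; apply/eqP=> ij; move: ji; rewrite ij; lia. Qed.

Section Dominance.

Variables m n : nat.
Implicit Types A B : monomial m n.

Lemma monomial_sum A : \sum_(i < n.+1) sval A i = m.
Proof. exact: eqP (svalP A). Qed.

Lemma psum_le_deg A k : psum (sval A) k <= m.
Proof. by have := psum_le_total (sval A) k; rewrite monomial_sum. Qed.

Lemma psum_last A k : n.+1 <= k -> psum (sval A) k = m.
Proof. by move=> nk; rewrite psum_full ?monomial_sum. Qed.

Lemma psum_inj A B :
  (forall k, k <= n.+1 -> psum (sval A) k = psum (sval B) k) -> A = B.
Proof.
move=> AB; apply: val_inj; apply/ffunP => i; apply/(@addnI (psum (sval A) i)).
by rewrite -psumS AB // [in RHS]AB 1?ltnW // -psumS.
Qed.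

Lemma Bcover_psum A B : Bcover A B ->
  exists i : 'I_n.+1, forall k, psum (sval A) k = psum (sval B) k + (k == i.+1).
Proof.
case=> i [j [ji [Ai [Bj Aother]]]]; exists i.
have ij := ord_succ_neq ji.
apply: (psum_transfer_next ji) => l.
have [->|li] := eqVneq l i; first by rewrite Ai ij addn0.
have [->|lj] := eqVneq l j; first by rewrite Bj addn0 addn1.
by rewrite !addn0 Aother.
Qed.

Definition dominates A B := forall k, psum (sval B) k <= psum (sval A) k.

Lemma Bge_dominates A B : Bge A B -> dominates A B.
Proof.
elim=> {A B} [A B /Bcover_psum[i AB]|A|A B C _ AB _ BC] k //.
- by rewrite AB leq_addr.
- exact: leq_trans (BC k) (AB k).
Qed.

Lemma raise_exists B (i j : 'I_n.+1) : j = i.+1 :> nat -> 0 < sval B j ->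
  exists2 B', Bcover B' B & forall k, psum (sval B') k = psum (sval B) k + (k == i.+1).
Proof.
move=> ji Bj_gt0.
have ij := ord_succ_neq ji.
pose Y := [ffun l => if l == i then (sval B l).+1
                     else if l == j then (sval B l).-1 else sval B l].
have BY l : Y l + (l == j) = sval B l + (l == i).
  rewrite ffunE; have [->|li] := eqVneq l i; first by rewrite ij addn0 addn1.
  by have [->|//] := eqVneq l j; rewrite addn1 addn0 prednK.
have Y_sum : \sum_(l < n.+1) Y l == m.
  have := psum_transfer BY n.+1; rewrite !ltn_ord !psum_full // monomial_sum.
  by move/addIn/eqP.
exists (exist _ Y Y_sum); last exact: psum_transfer_next ji BY.
exists i, j; rewrite /= !ffunE eqxx eq_sym ij eqxx !addn1 prednK //.
by do 3!split=> //; move=> l /negbTE li /negbTE lj; rewrite ffunE li lj.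
Qed.

Definition weight A := \sum_(k < n.+2) psum (sval A) k.

Lemma weight_le A B : dominates A B -> weight B <= weight A.
Proof. by move=> AB; apply: leq_sum => k _; apply: AB. Qed.

(* Raising [B] at the largest index where [A] strictly dominates it keeps [A]
   dominant, because beyond that index the partial sums of [B] already catch
   up with those of [A]. *)
Lemma dominates_raise A B k : dominates A B -> psum (sval B) k < psum (sval A) k ->
  exists B', [/\ Bcover B' B, dominates A B' & weight B' = (weight B).+1].
Proof.
move=> AB BkA; pose gap k := psum (sval B) k < psum (sval A) k.
have gap_le_n l : gap l -> l <= n.
  by rewrite /gap; case: (leqP l n) => // nl; rewrite !psum_last ?ltnn.
have [l gapl gap_max] := ex_maxnP (ex_intro gap k BkA) gap_le_n.
have l_gt0 : 0 < l by move: gapl; rewrite /gap; case: (l) => //; rewrite !psum0.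
have ln := gap_le_n _ gapl.
pose i : 'I_n.+1 := Ordinal (leq_ltn_trans (leq_pred l) (ln : l < n.+1)).
pose j : 'I_n.+1 := Ordinal (ln : l < n.+1).
have ji : j = i.+1 :> nat by rewrite /= prednK.
have Bj_gt0 : 0 < sval B j.
  have nogap : psum (sval A) l.+1 <= psum (sval B) l.+1.
    by rewrite leqNgt; apply/negP => /gap_max; rewrite ltnn.
  have := psum_mono (sval A) (leqnSn l); have := psumS (sval B) j.
  by move: nogap gapl; rewrite /gap /=; lia.
have [B' B'B psumB'] := raise_exists ji Bj_gt0.
rewrite /= prednK // in psumB'.
exists B'; split=> //.
- by move=> k'; rewrite psumB'; case: eqP => [->|_]; rewrite ?addn0 ?addn1.
- have indicator_sum : \sum_(k' < n.+2) (k' == l :> nat) = 1.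
    rewrite (eq_bigr (fun k' : 'I_n.+2 => if k' == l :> nat then 1 else 0)).
      by rewrite -big_mkcond (big_ord1_eq _ (fun=> 1)) ltnS (leq_trans ln).
    by move=> k' _; case: eqP.
  rewrite /weight; under eq_bigr => k' _ do rewrite psumB'.
  by rewrite big_split /= indicator_sum addn1.
Qed.

Lemma dominates_Bge A B : dominates A B -> Bge A B.
Proof.
have [d] := ubnP (weight A - weight B); elim: d B => // d IH B ltd AB.
case: (boolP [exists k : 'I_n.+2, psum (sval B) k < psum (sval A) k]).
  move=> /existsP[k BkA].
  have [B' [B'B AB' wB']] := dominates_raise AB BkA.
  have := weight_le AB'; rewrite wB' => lt_wB'.
  apply: rt_trans (rt_step _ _ _ _ B'B); apply: IH AB'; lia.
move=> /existsPn nogap; rewrite (@psum_inj A B); first exact: rt_refl.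
move=> k kn; apply/eqP; rewrite eqn_leq AB andbT leqNgt.
exact: nogap (Ordinal (kn : k < n.+2)).
Qed.

Lemma BgeE A B : Bge A B <-> dominates A B.
Proof. by split; [apply: Bge_dominates | apply: dominates_Bge]. Qed.

End Dominance.

Section UpClosedCount.

Variable p : nat -> bool.
Hypothesis p_up : forall i j, i <= j -> p i -> p j.

Lemma sum_upclosed_ge t N : p t -> N - t <= \sum_(i < N) p i.
Proof.
move=> pt; elim: N => [//|N IH]; rewrite big_ord_recr /=.
case: (leqP t N) => [tN|Nt]; last by rewrite (_ : N.+1 - t = 0) //; lia.
by rewrite (p_up tN pt) addn1 subSn.
Qed.

Lemma sum_upclosed_lt t N : ~~ p t -> \sum_(i < N) p i <= N - t.+1.
Proof.
move=> npt; elim: N => [|N IH]; first by rewrite big_ord0.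
rewrite big_ord_recr /=; case: (leqP N t) => [Nt|tN].
  have /negbTE -> : ~~ p N by apply: contra npt; apply: p_up.
  by rewrite addn0 (leq_trans IH) // leq_sub2l.
case: (p N); first by rewrite addn1 subSn.
by rewrite addn0 (leq_trans IH) // leq_sub2r.
Qed.

Lemma sum_upclosedE t N : t < N -> (N - t <= \sum_(i < N) p i) = p t.
Proof.
move=> tN; case: (boolP (p t)) => pt; first exact: sum_upclosed_ge.
by apply/negbTE; rewrite -ltnNge (leq_ltn_trans (sum_upclosed_lt N pt)) //; lia.
Qed.

End UpClosedCount.

Lemma sum_sub_leq_min M x : \sum_(j < M) (M - j <= x) = minn M x.
Proof.
elim: M => [|M IH]; first by rewrite big_ord0 min0n.
rewrite big_ord_recl subn0; under eq_bigr => i _ do rewrite /= subSS.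
by rewrite IH; case: (leqP M.+1 x) => /=; lia.
Qed.

Section Conjugation.

Variables m n : nat.
Implicit Types A B : monomial m n.

(* The staircase of partial sums of [A], read sideways. *)
Definition conj_psum A k : nat := \sum_(j < n) (m.+1 - k <= psum (sval A) j.+1).

Definition conj_exps A : {ffun 'I_m.+1 -> nat} :=
  [ffun k : 'I_m.+1 => conj_psum A k.+1 - conj_psum A k].

Lemma conj_psum0 A : conj_psum A 0 = 0.
Proof.
rewrite /conj_psum big1 // => j _.
by rewrite subn0 ltnNge psum_le_deg.
Qed.

Lemma conj_psum_last A : conj_psum A m.+1 = n.
Proof.
by rewrite /conj_psum subnn (eq_bigr (fun=> 1)) // sum_nat_const card_ord muln1.
Qed.

Lemma conj_psum_le A k : conj_psum A k <= n.
Proof.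
apply: (@leq_trans (\sum_(j < n) 1)); first by apply: leq_sum => j _; apply: leq_b1.
by rewrite sum_nat_const card_ord muln1.
Qed.

Lemma conj_psumS A k : conj_psum A k <= conj_psum A k.+1.
Proof.
apply: leq_sum => j _; case: (boolP (m.+1 - k <= _)) => // le_psum.
by rewrite (leq_trans _ le_psum) // subnS leq_pred.
Qed.

Lemma psum_conj_exps A k : k <= m.+1 -> psum (conj_exps A) k = conj_psum A k.
Proof.
elim: k => [|k IH] km; first by rewrite psum0 conj_psum0.
by rewrite (psumS _ (Ordinal km)) IH ?(ltnW km) // ffunE subnKC // conj_psumS.
Qed.

Lemma conj_exps_sum A : \sum_(k < m.+1) conj_exps A k == n.
Proof.
by rewrite -(psum_full (conj_exps A) (leqnn _)) psum_conj_exps // conj_psum_last.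
Qed.

Definition conj_mon A : monomial n m := exist _ (conj_exps A) (conj_exps_sum A).

Lemma conj_mon_dominates A B : dominates A B -> dominates (conj_mon A) (conj_mon B).
Proof.
move=> AB k /=; case: (leqP k m.+1) => km.
  rewrite !psum_conj_exps //; apply: leq_sum => j _.
  by case: (boolP (m.+1 - k <= _)) => // le_psum; rewrite (leq_trans le_psum (AB _)).
by rewrite !psum_full ?(ltnW km) // !(eqP (conj_exps_sum _)).
Qed.

Lemma conj_psum_geE A j k : j < m -> k <= n.+1 ->
  (n.+1 - k <= conj_psum A j.+1) = (m - j <= psum (sval A) k).
Proof.
move=> jm; case: k => [_|t].
  rewrite subn0 psum0 leqNgt ltnS conj_psum_le; apply/esym/negbTE.
  by rewrite -ltnNge subn_gt0.
rewrite ltnS subSS leq_eqVlt => /orP[/eqP->|tn].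
  by rewrite subnn leq0n psum_last // leq_subr.
rewrite /conj_psum subSS.
rewrite (sum_upclosedE (p := fun i => m - j <= psum (sval A) i.+1)) // => i i' ii'.
by move/leq_trans; apply; apply: psum_mono.
Qed.

End Conjugation.

Lemma conj_monK m n (A : monomial m n) : conj_mon (conj_mon A) = A.
Proof.
apply: psum_inj => k kn; rewrite /= psum_conj_exps // /conj_psum.
under eq_bigr => j _ do
  rewrite /= (psum_conj_exps _ (leqW (ltn_ord j))) (conj_psum_geE _ (ltn_ord j) kn).
by rewrite sum_sub_leq_min; apply/minn_idPr; apply: psum_le_deg.
Qed.

Theorem mainTheorem3 (m n : nat) : 0 < m -> 0 < n -> poset_iso m n n m.
Proof.
move=> _ _; exists (@conj_mon m n); split.
  by exists (@conj_mon n m); apply: conj_monK.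
move=> A B; rewrite !BgeE; split; first exact: conj_mon_dominates.
by move/conj_mon_dominates; rewrite !conj_monK.
Qed.
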